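(* Let $0<q<1/2$, $p=1-q$, $z\ge 1$ an integer and $\kappa>0$. Define $$P(z,\kappa)=1-\sum_{k=0}^{z-1}\left(1-\left(\frac qp\right)^{z-k}\right)\frac{\mu^k}{k!}e^{-\mu},\qquad \mu=\kappa z\frac qp.$$ Then $$P(z,\kappa)=1-Q\!\left(z,\kappa z\frac qp\right)+\left(\frac qp\right)^z e^{\kappa z\frac{p-q}{p}}\,Q(z,\kappa z),$$ where $Q(a,x)=\Gamma(a,x)/\Gamma(a)$, with $\Gamma(a,x)=\int_x^{+\infty}t^{a-1}e^{-t}\,dt$, is the regularized upper incomplete gamma function.
   Context: $P(z,\kappa)$ is the probability of success of a double-spend attack (attackers with relative hash power $q$, honest miners with $p$) conditional on the honest miners having mined $z$ blocks in time $\tau_1=\kappa z t_0$, where $t_0$ is the mean honest block time; during this time the number of attacker blocks is Poisson with mean $\mu=\kappa zq/p$, and attackers lagging $m$ blocks behind catch up with probability $(q/p)^m$. *)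

From Stdlib Require Import Reals.
From Coquelicot Require Import Coquelicot.
Open Scope R_scope.

Definition Gamma_up (a : nat) (x : R) : R :=
  RInt_gen (fun t => t ^ (a - 1) * exp (- t)) (at_point x) (Rbar_locally p_infty).

Definition Gamma_fun (a : nat) : R := Gamma_up a 0.

Definition Q_reg (a : nat) (x : R) : R := Gamma_up a x / Gamma_fun a.

(* P(z,kappa) = 1 - sum_{k=0}^{z-1} (1 - (q/p)^(z-k)) mu^k/k! e^(-mu),
   mu = kappa z q/p, p = 1 - q.  (sum_f_R0 f n sums k = 0..n.) *)
Definition P_ds (q kappa : R) (z : nat) : R :=
  let p := 1 - q in
  let mu := kappa * INR z * (q / p) in
  1 - sum_f_R0 (fun k => (1 - (q / p) ^ (z - k)) * (mu ^ k / INR (Factorial.fact k)) * exp (- mu))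
        (z - 1).

(** For integer order the incomplete gamma function is elementary:
    [d/dt (e^-t S_n(t)) = - e^-t t^n / n!] for the partial sum [S_n] of the
    exponential series, so [Gamma(n+1, x) = n! e^-x S_n(x)] and
    [Q(n+1, x) = e^-x S_n(x)], a Poisson tail.  Splitting the factor
    [1 - (q/p)^(z-k)] of [P(z, kappa)] then gives two such sums, and
    [(q/p)^(z-k) mu^k = (q/p)^z (kappa z)^k] turns the second one into
    [Q(z, kappa z)]. *)

From Stdlib Require Import Reals Lra Lia Factorial.
From Coquelicot Require Import Coquelicot.
Open Scope R_scope.

Definition exp_partial_sum (n : nat) (t : R) : R :=
  sum_f_R0 (fun k => t ^ k / INR (fact k)) n.

Lemma exp_partial_sum_S (n : nat) (t : R) :
  exp_partial_sum (S n) t = exp_partial_sum n t + t ^ S n / INR (fact (S n)).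
Proof. exact (tech5 _ n). Qed.

Lemma exp_partial_sum_0 (n : nat) : exp_partial_sum n 0 = 1.
Proof.
  induction n as [|n IH]; [unfold exp_partial_sum; simpl; field|].
  rewrite exp_partial_sum_S, IH, pow_i by lia. unfold Rdiv. ring.
Qed.

Lemma pow_mul_exp_opp_le (k : nat) (t : R) :
  0 < t -> t ^ k * exp (- t) <= INR (fact (S k)) / t.
Proof.
  intros Ht.
  pose proof (lt_0_INR _ (lt_O_fact (S k))) as Hfact.
  pose proof (exp_pos t) as Hexp.
  assert (Hterm : t ^ S k / INR (fact (S k)) <= exp t).
  { apply Rle_trans with (exp_partial_sum (S k) t).
    - rewrite exp_partial_sum_S.
      assert (0 <= exp_partial_sum k t).
      { apply cond_pos_sum. intros j. apply Rdiv_le_0_compat;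
          [apply pow_le; lra | apply lt_0_INR, lt_O_fact]. }
      lra.
    - apply exp_ge_taylor. lra. }
  rewrite exp_Ropp.
  apply (Rmult_le_reg_r (t * exp t / INR (fact (S k)))).
  { apply Rdiv_lt_0_compat; nra. }
  replace (t ^ k * / exp t * (t * exp t / INR (fact (S k))))
    with (t ^ S k / INR (fact (S k))) by (cbn [pow]; field; split; lra).
  replace (INR (fact (S k)) / t * (t * exp t / INR (fact (S k))))
    with (exp t) by (field; split; lra).
  exact Hterm.
Qed.

Lemma is_lim_pow_mul_exp_opp (k : nat) :
  is_lim (fun t => t ^ k * exp (- t)) p_infty 0.
Proof.
  apply (is_lim_le_le_loc (fun _ => 0) (fun t => INR (fact (S k)) * / t)).
  - exists 0. intros t Ht. split.
    + apply Rmult_le_pos; [apply pow_le; lra | apply Rlt_le, exp_pos].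
    + apply pow_mul_exp_opp_le; lra.
  - apply is_lim_const.
  - replace (Finite 0) with (Rbar_mult (INR (fact (S k))) 0) by (simpl; f_equal; ring).
    apply is_lim_scal_l, (is_lim_inv (fun t => t) p_infty p_infty);
      [apply is_lim_id | discriminate].
Qed.

Lemma is_lim_exp_opp_mul_partial_sum (n : nat) :
  is_lim (fun t => exp (- t) * exp_partial_sum n t) p_infty 0.
Proof.
  induction n as [|n IH].
  - apply (is_lim_ext (fun t => t ^ 0 * exp (- t))); [|apply is_lim_pow_mul_exp_opp].
    intros t. unfold exp_partial_sum. simpl. field.
  - apply (is_lim_ext (fun t => exp (- t) * exp_partial_sum n t
                                + t ^ S n * exp (- t) * / INR (fact (S n)))).
    { intros t. rewrite exp_partial_sum_S. unfold Rdiv. ring. }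
    replace (Finite 0) with (Finite (0 + 0 * / INR (fact (S n)))) by (f_equal; ring).
    apply is_lim_plus'; [exact IH|].
    apply (is_lim_scal_r (fun t => t ^ S n * exp (- t)) _ p_infty 0).
    apply is_lim_pow_mul_exp_opp.
Qed.

Lemma is_derive_exp_opp_mul_partial_sum (n : nat) (t : R) :
  is_derive (fun t => exp (- t) * exp_partial_sum n t) t
    (- (t ^ n / INR (fact n) * exp (- t))).
Proof.
  induction n as [|n IH].
  - apply (is_derive_ext (fun t => exp (- t))).
    { intros u. unfold exp_partial_sum. simpl. field. }
    auto_derive; [trivial | simpl; field].
  - apply (is_derive_ext (fun t => exp (- t) * exp_partial_sum n t
                                   + t ^ S n / INR (fact (S n)) * exp (- t))).
    { intros u. rewrite exp_partial_sum_S. lra. }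
    replace (- (t ^ S n / INR (fact (S n)) * exp (- t)))
      with (- (t ^ n / INR (fact n) * exp (- t))
            + (t ^ n / INR (fact n) * exp (- t)
               - t ^ S n / INR (fact (S n)) * exp (- t))) by ring.
    apply (is_derive_plus (fun t => exp (- t) * exp_partial_sum n t)); [exact IH|].
    auto_derive; [trivial|].
    change (match n with 0%nat => 1 | S _ => INR n + 1 end) with (INR (S n)).
    change (fact n + n * fact n)%nat with (fact (S n)).
    rewrite fact_simpl, mult_INR.
    pose proof (not_0_INR _ (Nat.neq_succ_0 n)).
    pose proof (INR_fact_neq_0 n).
    cbn [pow]. field. auto.
Qed.

Lemma Gamma_up_S (n : nat) (x : R) :
  Gamma_up (S n) x = INR (fact n) * (exp (- x) * exp_partial_sum n x).
Proof.
  set (G t := - INR (fact n) * (exp (- t) * exp_partial_sum n t)).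
  assert (HG : forall t, is_derive G t (t ^ n * exp (- t))).
  { intros t. unfold G.
    replace (t ^ n * exp (- t))
      with (- INR (fact n) * (- (t ^ n / INR (fact n) * exp (- t))))
      by (pose proof (INR_fact_neq_0 n); field; auto).
    apply is_derive_scal, is_derive_exp_opp_mul_partial_sum. }
  unfold Gamma_up. replace (S n - 1)%nat with n by lia.
  apply is_RInt_gen_unique.
  replace (INR (fact n) * (exp (- x) * exp_partial_sum n x)) with (0 - G x)
    by (unfold G; ring).
  apply (is_RInt_gen_ext (Derive G)).
  { apply filter_forall. intros ab u _. apply is_derive_unique, HG. }
  apply is_RInt_gen_Derive.
  - apply filter_forall. intros ab u _. eexists. apply HG.
  - apply filter_forall. intros ab u _.
    apply (continuous_ext (fun t => t ^ n * exp (- t))).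
    { intros t. symmetry. apply is_derive_unique, HG. }
    apply (ex_derive_continuous (K := R_AbsRing) (V := R_NormedModule)).
    auto_derive. trivial.
  - intros P HP. exact (locally_singleton _ _ HP).
  - pose proof (is_lim_scal_l _ (- INR (fact n)) _ _ (is_lim_exp_opp_mul_partial_sum n))
      as Hlim.
    replace (Rbar_mult (- INR (fact n)) 0) with (Finite 0) in Hlim by (simpl; f_equal; ring).
    exact Hlim.
Qed.

Lemma Q_reg_S (n : nat) (x : R) :
  Q_reg (S n) x = exp (- x) * exp_partial_sum n x.
Proof.
  unfold Q_reg, Gamma_fun. rewrite !Gamma_up_S, exp_partial_sum_0, Ropp_0, exp_0.
  pose proof (INR_fact_neq_0 n). field. auto.
Qed.

Lemma P_ds_S (q kappa : R) (n : nat) :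
  let r := q / (1 - q) in
  let K := kappa * INR (S n) in
  P_ds q kappa (S n) =
    1 - exp (- (K * r)) * exp_partial_sum n (K * r)
      + r ^ S n * exp (- (K * r)) * exp_partial_sum n K.
Proof.
  intros r K. unfold P_ds. fold r K.
  replace (S n - 1)%nat with n by lia.
  rewrite (sum_eq _ (fun k => (K * r) ^ k / INR (fact k) * exp (- (K * r))
                              - K ^ k / INR (fact k) * (r ^ S n * exp (- (K * r))))).
  2: { intros k Hk.
       replace (r ^ S n) with (r ^ (S n - k) * r ^ k)
         by (rewrite <- pow_add; f_equal; lia).
       rewrite Rpow_mult_distr. unfold Rdiv. ring. }
  rewrite minus_sum, <- !scal_sum. unfold exp_partial_sum. ring.
Qed.

Theorem mainTheorem5 (q kappa : R) (z : nat) :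
  0 < q < 1 / 2 -> (1 <= z)%nat -> 0 < kappa ->
  let p := 1 - q in
  P_ds q kappa z =
    1 - Q_reg z (kappa * INR z * (q / p))
      + (q / p) ^ z * exp (kappa * INR z * ((p - q) / p)) * Q_reg z (kappa * INR z).
Proof.
  intros Hq Hz _ p.
  destruct z as [|n]; [lia|].
  rewrite P_ds_S, !Q_reg_S. fold p.
  set (r := q / p). set (K := kappa * INR (S n)).
  assert (Hexp : exp (K * ((p - q) / p)) * exp (- K) = exp (- (K * r))).
  { rewrite <- exp_plus. f_equal. unfold r, p. field. lra. }
  rewrite <- Hexp. ring.
Qed.
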